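(* Let $n\ge 0$, put $N=2^n$ and $h={}_0h_n$. Define the words \begin{align*} {}_1h_{n+1}&=\delta_g(h)\,u\,\delta_g(h)\,r\,\delta_x(h)\,d\,\delta_x(h),\\ {}_2h_{n+1}&=\delta_f(h)\,u\,h\,r\,h\,d\,\delta_f(h),\\ {}_3h_{n+1}&=\delta_m(h)\,u\,\delta_g(h)\,r\,\delta_x(h)\,d\,\delta_m(h),\\ {}_4h_{n+1}&=\delta_o(h)\,u\,h\,r\,h\,d\,\delta_f(h),\\ {}_5h_{n+1}&=\delta_m(h)\,u\,\delta_g(h)\,r\,\delta_x(h)\,d\,\delta_x(h). \end{align*} Then each of these words traces a Hamiltonian path of the grid $\{0,\dots,2N-1\}^2$, with the following endpoints: \begin{enumerate} \item ${}_1h_{n+1}$ goes from $(N-1,0)$ to $(N,0)$; the endpoints are adjacent, so this is the closed Moore curve. \item ${}_2h_{n+1}$ goes from $(N-1,N-1)$ to $(N,N-1)$; the endpoints are adjacent. \item ${}_3h_{n+1}$ goes from $(0,N-1)$ to $(2N-1,N-1)$. \item ${}_4h_{n+1}$ goes from $(0,0)$ to $(N,N-1)$. \item ${}_5h_{n+1}$ goes from $(0,N-1)$ to $(N,0)$. \end{enumerate}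
   Context: Let $\Sigma=\{u,d,r,l\}$, where $u$ = up, $d$ = down, $r$ = right and $l$ = left. Set $v(u)=(0,1)$, $v(d)=(0,-1)$, $v(r)=(1,0)$ and $v(l)=(-1,0)$. For a finite word $w=w_1\cdots w_k$ over $\Sigma$ and a point $p\in\mathbb{Z}^2$, the lattice path encoded by $w$ from $p$ is the sequence $p_0=p$, $p_i=p_{i-1}+v(w_i)$ for $i=1,\dots,k$. For $m\ge 1$, say that $w$ traces a Hamiltonian path of the grid $\{0,\dots,m-1\}^2$ from $a$ to $b$ if the path encoded by $w$ from $a$ satisfies three conditions: the points $p_0,\dots,p_k$ are pairwise distinct; $\{p_0,\dots,p_k\}=\{0,\dots,m-1\}^2$, so that $k=m^2-1$; and $p_k=b$. Grid points represent the $m^2$ equal subsquares of the unit square, and consecutive points are edge-adjacent squares. Juxtaposition denotes concatenation of words. The following letter-to-letter morphisms of $\Sigma^*$ are applied letterwise: \begin{itemize} \item $\delta_o$: $u\mapsto r$, $r\mapsto u$, $d\mapsto l$, $l\mapsto d$; \item $\delta_a$: $u\mapsto l$, $r\mapsto d$, $d\mapsto r$, $l\mapsto u$; \item $\delta_g$: $u\mapsto l$, $r\mapsto u$, $d\mapsto r$, $l\mapsto d$; \item $\delta_x$: $u\mapsto r$, $r\mapsto d$, $d\mapsto l$, $l\mapsto u$; \item $\delta_f$: $u\mapsto d$, $r\mapsto l$, $d\mapsto u$, $l\mapsto r$; \item $\delta_m$: $u\mapsto d$, $r\mapsto r$, $d\mapsto u$, $l\mapsto l$. \end{itemize} The Hilbert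 words are defined recursively by ${}_0h_0=\varepsilon$ (the empty word) and \[ {}_0h_{n+1}=\delta_o({}_0h_n)\,u\,{}_0h_n\,r\,{}_0h_n\,d\,\delta_a({}_0h_n). \] For example, ${}_0h_1=urd$. *)

From HB Require Import structures.
From mathcomp Require Import all_boot all_order all_algebra.
Set Implicit Arguments. Unset Strict Implicit. Unset Printing Implicit Defensive.
Import Order.TTheory GRing.Theory Num.Theory.
Local Open Scope ring_scope.

Inductive letter := U | D | R | L.

Definition point := (int * int)%type.

Definition vec (a : letter) : point :=
  match a with
  | U => (0, 1) | D => (0, -1) | R => (1, 0) | L => (-1, 0)
  end.

Definition step (p : point) (a : letter) : point :=
  (p.1 + (vec a).1, p.2 + (vec a).2).

Fixpoint trace (p : point) (w : seq letter) : seq point :=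
  match w with
  | [::] => [:: p]
  | a :: w' => p :: trace (step p a) w'
  end.

Definition in_grid (m : nat) (q : point) : bool :=
  (0 <= q.1) && (q.1 < m%:Z) && (0 <= q.2) && (q.2 < m%:Z).

Definition traces_ham (m : nat) (w : seq letter) (a b : point) : Prop :=
  let ps := trace a w in
  [/\ uniq ps, (forall q : point, q \in ps <-> in_grid m q) & last a ps = b].

Definition adjacent (p q : point) : Prop :=
  (`|p.1 - q.1| + `|p.2 - q.2| = 1)%R.

Definition d_o a := match a with U => R | R => U | D => L | L => D end.
Definition d_a a := match a with U => L | R => D | D => R | L => U end.
Definition d_g a := match a with U => L | R => U | D => R | L => D end.
Definition d_x a := match a with U => R | R => D | D => L | L => U end.
Definition d_f a := match a with U => D | R => L | D => U | L => R end.
Definition d_m a := match a with U => D | R => R | D => U | L => L end.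

Fixpoint hilb (n : nat) : seq letter :=
  match n with
  | 0 => [::]
  | n'.+1 => map d_o (hilb n') ++ U :: hilb n' ++ R :: hilb n' ++ D :: map d_a (hilb n')
  end.

Definition h1 (h : seq letter) :=
  map d_g h ++ U :: map d_g h ++ R :: map d_x h ++ D :: map d_x h.
Definition h2 (h : seq letter) :=
  map d_f h ++ U :: h ++ R :: h ++ D :: map d_f h.
Definition h3 (h : seq letter) :=
  map d_m h ++ U :: map d_g h ++ R :: map d_x h ++ D :: map d_m h.
Definition h4 (h : seq letter) :=
  map d_o h ++ U :: h ++ R :: h ++ D :: map d_f h.
Definition h5 (h : seq letter) :=
  map d_m h ++ U :: map d_g h ++ R :: map d_x h ++ D :: map d_x h.

(* Each letter morphism δ of the statement describes the action on directions
   of a symmetry of the square.  Consequently, transforming a word by δ transforms its lattice path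
   by the matching symmetry, and a further translation places it in any K×K
   cell: Hamiltonicity is transported to that cell ([ham_path_place]).
   Hamiltonian paths of two disjoint regions joined by one step form a
   Hamiltonian path of their union ([ham_path_glue]).  As the 2K-grid is the
   union of four K-cells, a word  w1 u w2 r w3 d w4  built from transformed
   copies of one Hamiltonian word is Hamiltonian as soon as the three joining
   steps connect consecutive blocks ([four_blocks]).  By induction this shows
   that 0h_n traces the 2^n-grid from (0,0) to (2^n-1,0) ([hilb_ham]); each of
   the five words is then an instance of [four_blocks] whose joins and
   endpoints are checked by linear arithmetic. *)

From HB Require Import structures.
From mathcomp Require Import all_boot all_order all_algebra zify.
Import Order.TTheory GRing.Theory Num.Theory.
Local Open Scope ring_scope.

Definition ham_path (P : pred point) (w : seq letter) (a b : point) : Prop :=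
  let ps := trace a w in
  [/\ uniq ps, forall q, (q \in ps) = P q & last a ps = b].

Lemma traces_hamE m w a b : traces_ham m w a b <-> ham_path (in_grid m) w a b.
Proof.
rewrite /traces_ham /ham_path; split=> -[uniq_ps mem_ps last_ps]; split=> // q.
- by apply/idP/idP => /mem_ps.
- by rewrite mem_ps.
Qed.

Lemma last_trace x q w : last x (trace q w) = last q (trace q w).
Proof. by case: w. Qed.

Lemma trace_cat p w1 a w2 :
  trace p (w1 ++ a :: w2) = trace p w1 ++ trace (step (last p (trace p w1)) a) w2.
Proof. by elim: w1 p => [|b w1 IH] p //=; rewrite IH [last p _]last_trace. Qed.

Lemma ham_path_eq {P Q w a b} : P =1 Q -> ham_path P w a b -> ham_path Q w a b.
Proof. by move=> PQ [uniq_ps mem_ps last_ps]; split=> // q; rewrite mem_ps PQ. Qed.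

Definition intertwines (f : letter -> letter) (M : point -> point) : Prop :=
  forall q a, step (M q) (f a) = M (step q a).

Lemma trace_map f M w q : intertwines f M -> trace (M q) (map f w) = map M (trace q w).
Proof. by move=> fM; elim: w q => [|a w IH] q //=; rewrite fM IH. Qed.

Lemma ham_path_map {P f M} N {w a b} : intertwines f M -> cancel M N -> cancel N M ->
  ham_path P w a b -> ham_path (fun q => P (N q)) (map f w) (M a) (M b).
Proof.
move=> fM MK NK [uniq_ps mem_ps last_ps].
rewrite /ham_path trace_map // last_map last_ps.
split=> // [|q]; first by rewrite map_inj_uniq //; exact: can_inj MK.
by rewrite -{1}(NK q) (mem_map (can_inj MK)) mem_ps.
Qed.

Lemma ham_path_glue {P1 P2 w1 w2 a1 b1 a2 b2 c} :
  ham_path P1 w1 a1 b1 -> ham_path P2 w2 a2 b2 -> step b1 c = a2 ->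
  (forall q, P2 q -> ~~ P1 q) ->
  ham_path (fun q => P1 q || P2 q) (w1 ++ c :: w2) a1 b2.
Proof.
move=> [uniq1 mem1 last1] [uniq2 mem2 last2] join disj.
rewrite /ham_path trace_cat last1 join.
split=> [|q|]; last by rewrite last_cat last_trace.
- rewrite cat_uniq uniq1 uniq2 andbT /=; apply/hasPn => q.
  by rewrite mem1 mem2; exact: disj.
- by rewrite mem_cat mem1 mem2.
Qed.

Record sym := Sym { swap : bool; flipx : bool; flipy : bool }.

Definition sym_point (K : nat) (s : sym) (q : point) : point :=
  let p := if swap s then (q.2, q.1) else q in
  (if flipx s then K%:Z - 1 - p.1 else p.1, if flipy s then K%:Z - 1 - p.2 else p.2).

Definition sym_letter (s : sym) (a : letter) : letter :=
  let a1 := if swap s then d_o a else a in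
  let a2 := if flipx s then match a1 with R => L | L => R | b => b end else a1 in
  if flipy s then match a2 with U => D | D => U | b => b end else a2.

Lemma sym_point_step K s : intertwines (sym_letter s) (sym_point K s).
Proof. by case: s => [[] [] []] [x y] []; rewrite /step /sym_point /=; congr pair; lia. Qed.

Lemma sym_point_grid K s q : in_grid K (sym_point K s q) = in_grid K q.
Proof.
by case: s => [[] [] []]; case: q => x y; rewrite /sym_point /in_grid /=; apply/idP/idP; lia.
Qed.

Definition sym_inv (s : sym) : sym :=
  if swap s then Sym true (flipy s) (flipx s) else s.

Lemma sym_invK : involutive sym_inv.
Proof. by case=> [[] ? ?]. Qed.

Lemma sym_pointK K s : cancel (sym_point K s) (sym_point K (sym_inv s)).
Proof. by case: s => [[] [] []] [x y]; rewrite /sym_point /=; congr pair; lia. Qed.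

Lemma sym_pointVK K s : cancel (sym_point K (sym_inv s)) (sym_point K s).
Proof. by rewrite -{2}(sym_invK s); exact: sym_pointK. Qed.

Definition cell (K : nat) (o q : point) : bool := in_grid K (q.1 - o.1, q.2 - o.2).

Definition place (K : nat) (s : sym) (o q : point) : point :=
  let p := sym_point K s q in (p.1 + o.1, p.2 + o.2).

Definition unplace (K : nat) (s : sym) (o q : point) : point :=
  sym_point K (sym_inv s) (q.1 - o.1, q.2 - o.2).

Lemma placeK K s o : cancel (place K s o) (unplace K s o).
Proof.
by move=> q; rewrite /unplace /place /= !addrK; case: (sym_point K s q) => x y; exact: sym_pointK.
Qed.

Lemma unplaceK K s o : cancel (unplace K s o) (place K s o).
Proof. by move=> q; rewrite /unplace /place sym_pointVK /= !subrK; case: q. Qed.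

Lemma place_step K s o : intertwines (sym_letter s) (place K s o).
Proof. by move=> [x y] c; rewrite /place -sym_point_step /step /=; congr pair; lia. Qed.

Lemma ham_path_place {K w a b} s o : ham_path (in_grid K) w a b ->
  ham_path (cell K o) (map (sym_letter s) w) (place K s o a) (place K s o b).
Proof.
move=> hw; apply: ham_path_eq (ham_path_map (unplace K s o) _ _ _ hw).
- by move=> q; rewrite /unplace sym_point_grid.
- exact: place_step.
- exact: placeK.
- exact: unplaceK.
Qed.

Definition quad_word (s1 s2 s3 s4 : sym) (h : seq letter) : seq letter :=
  map (sym_letter s1) h ++ U :: map (sym_letter s2) h ++ R ::
  map (sym_letter s3) h ++ D :: map (sym_letter s4) h.

Lemma grid_cells (K : nat) q : in_grid (2 * K)%N q =
  [|| cell K (0, 0) q, cell K (0, K%:Z) q, cell K (K%:Z, K%:Z) q | cell K (K%:Z, 0) q].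
Proof. by case: q => x y; rewrite /cell /in_grid /=; apply/idP/idP; lia. Qed.

Lemma four_blocks {K h a e s1 s2 s3 s4 start finish} :
  ham_path (in_grid K) h a e ->
  step (place K s1 (0, 0) e) U = place K s2 (0, K%:Z) a ->
  step (place K s2 (0, K%:Z) e) R = place K s3 (K%:Z, K%:Z) a ->
  step (place K s3 (K%:Z, K%:Z) e) D = place K s4 (K%:Z, 0) a ->
  place K s1 (0, 0) a = start -> place K s4 (K%:Z, 0) e = finish ->
  ham_path (in_grid (2 * K)%N) (quad_word s1 s2 s3 s4 h) start finish.
Proof.
move=> hK join12 join23 join34 <- <-.
apply: (ham_path_eq _ (ham_path_glue (ham_path_place s1 (0, 0) hK)
  (ham_path_glue (ham_path_place s2 (0, K%:Z) hK)
     (ham_path_glue (ham_path_place s3 (K%:Z, K%:Z) hK) (ham_path_place s4 (K%:Z, 0) hK)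
        join34 _) join23 _) join12 _)).
- by move=> q; rewrite grid_cells.
all: by move=> [x y]; rewrite /cell /in_grid /=; lia.
Qed.

Definition sym_id := Sym false false false.
Definition sym_o := Sym true false false.
Definition sym_a := Sym true true true.
Definition sym_g := Sym true true false.
Definition sym_x := Sym true false true.
Definition sym_f := Sym false true true.
Definition sym_m := Sym false false true.

Lemma sym_letter_id : sym_letter sym_id =1 id. Proof. by case. Qed.
Lemma d_oE : d_o =1 sym_letter sym_o. Proof. by case. Qed.
Lemma d_aE : d_a =1 sym_letter sym_a. Proof. by case. Qed.
Lemma d_gE : d_g =1 sym_letter sym_g. Proof. by case. Qed.
Lemma d_xE : d_x =1 sym_letter sym_x. Proof. by case. Qed.
Lemma d_fE : d_f =1 sym_letter sym_f. Proof. by case. Qed.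
Lemma d_mE : d_m =1 sym_letter sym_m. Proof. by case. Qed.

(* Joins and endpoints of concrete instances of [four_blocks] are identities
   between explicit points with affine integer coordinates. *)
Ltac corner := rewrite /place /sym_point /step /=; congr pair; lia.

Lemma hilb_ham n : ham_path (in_grid (2 ^ n)) (hilb n) (0, 0) ((2 ^ n)%N%:Z - 1, 0).
Proof.
elim: n => [|n IH].
  split=> // -[x y]; rewrite inE /in_grid /=.
  by apply/idP/idP => [/eqP [-> ->] // | in_grid1]; apply/eqP; congr pair; lia.
have -> : hilb n.+1 = quad_word sym_o sym_id sym_id sym_a (hilb n).
  by rewrite /= /quad_word (eq_map d_oE) (eq_map d_aE) (eq_map sym_letter_id) map_id.
by rewrite expnS; apply: (four_blocks IH); corner.
Qed.

Section QuadrantWords.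
Variables (K : nat) (h : seq letter).
Hypothesis hK : ham_path (in_grid K) h (0, 0) (K%:Z - 1, 0).

Lemma h1_ham : traces_ham (2 * K)%N (h1 h) (K%:Z - 1, 0) (K%:Z, 0).
Proof.
apply/traces_hamE; have -> : h1 h = quad_word sym_g sym_g sym_x sym_x h.
  by rewrite /h1 /quad_word (eq_map d_gE) (eq_map d_xE).
by apply: (four_blocks hK); corner.
Qed.

Lemma h2_ham : traces_ham (2 * K)%N (h2 h) (K%:Z - 1, K%:Z - 1) (K%:Z, K%:Z - 1).
Proof.
apply/traces_hamE; have -> : h2 h = quad_word sym_f sym_id sym_id sym_f h.
  by rewrite /h2 /quad_word (eq_map d_fE) (eq_map sym_letter_id) map_id.
by apply: (four_blocks hK); corner.
Qed.

Lemma h3_ham : traces_ham (2 * K)%N (h3 h) (0, K%:Z - 1) (2 * K%:Z - 1, K%:Z - 1).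
Proof.
apply/traces_hamE; have -> : h3 h = quad_word sym_m sym_g sym_x sym_m h.
  by rewrite /h3 /quad_word (eq_map d_mE) (eq_map d_gE) (eq_map d_xE).
by apply: (four_blocks hK); corner.
Qed.

Lemma h4_ham : traces_ham (2 * K)%N (h4 h) (0, 0) (K%:Z, K%:Z - 1).
Proof.
apply/traces_hamE; have -> : h4 h = quad_word sym_o sym_id sym_id sym_f h.
  by rewrite /h4 /quad_word (eq_map d_oE) (eq_map d_fE) (eq_map sym_letter_id) map_id.
by apply: (four_blocks hK); corner.
Qed.

Lemma h5_ham : traces_ham (2 * K)%N (h5 h) (0, K%:Z - 1) (K%:Z, 0).
Proof.
apply/traces_hamE; have -> : h5 h = quad_word sym_m sym_g sym_x sym_x h.
  by rewrite /h5 /quad_word (eq_map d_mE) (eq_map d_gE) (eq_map d_xE).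
by apply: (four_blocks hK); corner.
Qed.

End QuadrantWords.

Lemma adjacent_right (x y : int) : adjacent (x - 1, y) (x, y).
Proof. by rewrite /adjacent /= subrr normr0 addr0 addrAC subrr add0r normrN normr1. Qed.

Theorem mainTheorem1 (n : nat) :
  let N : int := (2 ^ n)%N%:Z in
  let m : nat := (2 * 2 ^ n)%N in
  let h := hilb n in
  [/\ traces_ham m (h1 h) (N - 1, 0) (N, 0) /\ adjacent (N - 1, 0) (N, 0),
      traces_ham m (h2 h) (N - 1, N - 1) (N, N - 1) /\ adjacent (N - 1, N - 1) (N, N - 1),
      traces_ham m (h3 h) (0, N - 1) (2 * N - 1, N - 1),
      traces_ham m (h4 h) (0, 0) (N, N - 1)
    & traces_ham m (h5 h) (0, N - 1) (N, 0)].
Proof.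
move=> N m h; have hK := hilb_ham n.
split.
- by split; [exact: h1_ham | exact: adjacent_right].
- by split; [exact: h2_ham | exact: adjacent_right].
- exact: h3_ham.
- exact: h4_ham.
- exact: h5_ham.
Qed.
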